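(* Every weak factorization structure is a factorization structure.
   Context: Let $\mathbb{F}=\mathbb{R}$ or $\mathbb{C}$, $V_1,\ldots,V_m$ ($m\ge2$) 2-dimensional $\mathbb{F}$-vector spaces, $V^*=V_1^*\otimes\cdots\otimes V_m^*$. For $\ell\in\mathbb{P}(V_j)$ (the set of 1-dimensional subspaces, with Zariski topology) let $\Sigma^0_{j,\ell}=V_1^*\otimes\cdots\otimes V_{j-1}^*\otimes\ell^0\otimes V_{j+1}^*\otimes\cdots\otimes V_m^*$, where $\ell^0\subset V_j^*$ is the annihilator of $\ell$. ''Generic $\ell$'' means all $\ell$ in some nonempty Zariski-open subset. A weak factorization structure of dimension $m$ is an injective linear map $\varphi:\mathfrak{h}\to V^*$ with $\dim\mathfrak{h}=m+1$ such that $\dim(\varphi(\mathfrak{h})\cap\Sigma^0_{j,\ell})\ge1$ for every $j$ and generic $\ell\in\mathbb{P}(V_j)$. A factorization structure is such a map with $\dim(\varphi(\mathfrak{h})\cap\Sigma^0_{j,\ell})=1$ for every $j$ and generic $\ell\in\mathbb{P}(V_j)$. *)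

From HB Require Import structures.
From mathcomp Require Import all_boot all_order all_algebra.
From mathcomp Require Import reals.
From mathcomp Require Import complex.
Set Implicit Arguments. Unset Strict Implicit. Unset Printing Implicit Defensive.
Import Order.TTheory GRing.Theory Num.Theory.
Local Open Scope ring_scope.

(* V_j = F^2 = 'rV[F]_2 ; V_j^* = 'rV[F]_2 with the pairing below.
   V^* = V_1^* (x) ... (x) V_m^* = functions on multi-indices 'I_m -> 'I_2. *)
Definition tidx (m : nat) := {ffun 'I_m -> 'I_2}.
Definition tens (F : fieldType) (m : nat) := {ffun tidx m -> F^o}.

Definition pairing (F : fieldType) (a v : 'rV[F]_2) : F :=
  \sum_(k < 2) a 0 k * v 0 k.

Definition ptensor (F : fieldType) (m : nat) (a : 'I_m -> 'rV[F]_2) : tens F m :=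
  [ffun i : tidx m => \prod_(k < m) a k 0 (i k)].

Definition tensor_span (F : fieldType) (m : nat)
    (U : 'I_m -> {vspace 'rV[F]_2}) : {vspace tens F m} :=
  <<[seq ptensor (fun k => (vbasis (U k))`_(f k)) | f : tidx m]>>%VS.

Definition annih (F : fieldType) (v : 'rV[F]_2) : {vspace 'rV[F]_2} :=
  lker (linfun (fun a : 'rV[F]_2 => (pairing a v : F^o))).

Definition Sigma0 (F : fieldType) (m : nat) (j : 'I_m) (v : 'rV[F]_2)
    : {vspace tens F m} :=
  tensor_span (fun k => if k == j then annih v else fullv).

(* "P holds for generic l in P(V_j)": P holds on a nonempty Zariski-open
   subset of P^1, i.e. on all lines [v] outside the zero set of some nonzero
   binary form  sum_k p_k x^k y^(d-k)  (the basic open sets of P^1). *)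
Definition generic (F : fieldType) (P : 'rV[F]_2 -> Prop) : Prop :=
  exists (d : nat) (p : {poly F}),
    [/\ p != 0, (size p <= d.+1)%N &
      forall v : 'rV[F]_2, v != 0 ->
        \sum_(k < d.+1) p`_k * v 0 0 ^+ k * v 0 1 ^+ (d - k) != 0 -> P v].

Definition weak_factorization_structure (F : fieldType) (m : nat)
    (hT : vectType F) (phi : 'Hom(hT, tens F m)) : Prop :=
  [/\ \dim (fullv : {vspace hT}) = m.+1,
      lker phi = 0%VS &
      forall j : 'I_m,
        generic (fun v => (1 <= \dim (limg phi :&: Sigma0 j v))%N)].

Definition factorization_structure (F : fieldType) (m : nat)
    (hT : vectType F) (phi : 'Hom(hT, tens F m)) : Prop :=
  [/\ \dim (fullv : {vspace hT}) = m.+1,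
      lker phi = 0%VS &
      forall j : 'I_m,
        generic (fun v => \dim (limg phi :&: Sigma0 j v) = 1%N)].

From HB Require Import structures.
From mathcomp Require Import all_boot all_order all_algebra.
From mathcomp Require Import reals complex.
From mathcomp Require Import ring zify.
From Stdlib Require Import Classical.
Set Implicit Arguments. Unset Strict Implicit. Unset Printing Implicit Defensive.
Import Order.TTheory GRing.Theory Num.Theory.
Local Open Scope ring_scope.

(* Contracting slot j of a tensor with v in V_j kills Sigma0_{j,[v]};
   contractions in different slots commute, and the kernels of the contractions
   of one slot at two distinct points of P^1 meet trivially.  Let W = phi(h),
   of dimension m+1, meet Sigma0_{j',l} nontrivially for generic l in every
   slot.  If W met the kernel of the contraction C_{j,c} in dimension >= 2 for
   infinitely many c, one could pick such a c for which C_{j,c} W is nonzero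
   and still meets the contraction kernels of every other slot at infinitely
   many points; contracting successively in the other m-1 slots costs at least
   one dimension each time, so dim W >= 2 + (m-1) + 1.  Hence the intersection
   has dimension <= 1 off finitely many points, which is a generic condition. *)

Lemma big_ord2 (V : nmodType) (G : 'I_2 -> V) : \sum_(k < 2) G k = G 0 + G 1.
Proof. by rewrite big_ord_recr big_ord1; congr (G _ + G _); apply: val_inj. Qed.

Section Contraction.
Variables (F : fieldType) (m : nat).

Definition set_idx (i : tidx m) (j : 'I_m) (k : 'I_2) : tidx m :=
  [ffun l => if l == j then k else i l].

Lemma set_idxE i j k l : set_idx i j k l = if l == j then k else i l.
Proof. by rewrite ffunE. Qed.

Lemma set_idx_id i j : set_idx i j (i j) = i.
Proof. by apply/ffunP => l; rewrite set_idxE; case: eqP => [->|]. Qed.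

Lemma set_idxC i j j' k k' : j != j' ->
  set_idx (set_idx i j k) j' k' = set_idx (set_idx i j' k') j k.
Proof.
move=> neq_jj'; apply/ffunP => l; rewrite !set_idxE.
by case: (eqVneq l j') => [->|//]; rewrite eq_sym (negbTE neq_jj').
Qed.

Definition contract_fun (j : 'I_m) (v : 'rV[F]_2) (f : tens F m) : tens F m :=
  [ffun i => \sum_(k < 2) v 0 k *: f (set_idx i j k)].

Fact contract_fun_linear j v : linear (contract_fun j v).
Proof.
move=> a f g; apply/ffunP => i; rewrite !ffunE scaler_sumr -big_split /=.
by apply: eq_bigr => k _; rewrite !ffunE scalerDr !scalerA mulrC.
Qed.

HB.instance Definition _ j v :=
  GRing.isLinear.Build F (tens F m) (tens F m) _ (contract_fun j v)
    (contract_fun_linear j v).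

(* The result does not depend on the [j]-th index of its argument. *)
Definition contract j v : 'End(tens F m) := linfun (contract_fun j v).

Lemma contractE j v f i :
  contract j v f i = \sum_(k < 2) v 0 k * f (set_idx i j k).
Proof. by rewrite lfunE ffunE. Qed.

Lemma contractC j j' v w f : j != j' ->
  contract j v (contract j' w f) = contract j' w (contract j v f).
Proof.
move=> neq_jj'; apply/ffunP => i; rewrite !contractE.
under eq_bigr => k _ do rewrite contractE mulr_sumr.
under [RHS]eq_bigr => k _ do rewrite contractE mulr_sumr.
rewrite exchange_big /=; apply: eq_bigr => k' _; apply: eq_bigr => k _.
by rewrite mulrCA set_idxC.
Qed.

Definition chart (c : F) : 'rV[F]_2 := \row_(k < 2) (if k == ord0 then c else 1).

Lemma contract_chartE j c f i :
  contract j (chart c) f i = c * f (set_idx i j 0) + f (set_idx i j 1).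
Proof. by rewrite contractE big_ord2 !mxE /= mul1r. Qed.

Lemma lker_contract_chart_eq0 j c c' x : c != c' ->
  x \in lker (contract j (chart c)) -> x \in lker (contract j (chart c')) ->
  x = 0.
Proof.
rewrite !memv_ker => neq_cc' /eqP xc /eqP xc'; apply/ffunP => i.
have /eqP := congr1 (fun g : tens F m => g i) xc.
have /eqP := congr1 (fun g : tens F m => g i) xc'.
rewrite /= !contract_chartE !ffunE => /eqP e' /eqP e.
have x0 : x (set_idx i j 0) = 0.
  have /eqP : (c - c') * x (set_idx i j 0) = 0.
    by rewrite -[RHS](subrr 0) -{1}e -e'; ring.
  by rewrite mulf_eq0 subr_eq0 (negbTE neq_cc') => /eqP.
have x1 : x (set_idx i j 1) = 0 by rewrite -e x0 mulr0 add0r.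
by rewrite -(set_idx_id i j); case: (i j) => -[|[|//]] ?;
  [rewrite -x0 | rewrite -x1]; congr (x (set_idx _ _ _)); apply: val_inj.
Qed.

Lemma lker_contract_chart j (v : 'rV[F]_2) : v 0 1 != 0 ->
  lker (contract j v) = lker (contract j (chart (v 0 0 / v 0 1))).
Proof.
move=> v1; apply/vspaceP => f; rewrite !memv_ker.
suff -> : contract j v f = v 0 1 *: contract j (chart (v 0 0 / v 0 1)) f.
  by rewrite scaler_eq0 (negbTE v1).
apply/ffunP => i; rewrite ffunE contract_chartE contractE big_ord2.
by rewrite /GRing.scale /= mulrDr mulrA mulrCA divff // mulr1.
Qed.

Definition pairing_left (v a : 'rV[F]_2) : F^o := pairing a v.

Fact pairing_left_linear v : linear (pairing_left v).
Proof.
move=> c a b; rewrite /pairing_left /pairing scaler_sumr -big_split /=.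
by apply: eq_bigr => k _; rewrite !mxE /GRing.scale /= mulrDl mulrA.
Qed.

HB.instance Definition _ v :=
  GRing.isLinear.Build F 'rV[F]_2 F^o _ (pairing_left v) (pairing_left_linear v).

Lemma annihP (v a : 'rV[F]_2) : a \in annih v -> pairing a v = 0.
Proof.
have -> : annih v = lker (linfun (pairing_left v)) by [].
by rewrite memv_ker lfunE => /eqP.
Qed.

Lemma Sigma0_sub_lker_contract j (v : 'rV[F]_2) :
  (Sigma0 j v <= lker (contract j v))%VS.
Proof.
apply/span_subvP => _ /mapP [g _ ->]; set a := fun k => _.
have aj : pairing (a j) v = 0.
  apply: annihP; rewrite /a eqxx.
  have [gj_small|gj_big] := ltnP (g j) (size (vbasis (annih v))).
    exact/vbasis_mem/mem_nth.
  by rewrite nth_default // mem0v.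
rewrite memv_ker; apply/eqP/ffunP => i; rewrite contractE ffunE.
under eq_bigr => k _.
  rewrite ffunE (bigD1 j) //= set_idxE eqxx.
  under eq_bigr => l /negbTE nlj do rewrite set_idxE nlj.
  over.
rewrite (eq_bigr (fun k => a j 0 k * v 0 k * \prod_(l < m | l != j) a l 0 (i l))).
  by rewrite -mulr_suml [X in X * _]aj mul0r.
by move=> k _; rewrite mulrA [v 0 k * _]mulrC.
Qed.

End Contraction.

Section Cofinite.
Variable F : fieldType.

Definition infinitely_many (P : F -> Prop) :=
  forall s : seq F, exists2 c, c \notin s & P c.

Definition cofinitely (P : F -> Prop) :=
  exists s : seq F, forall c, c \notin s -> P c.

Lemma infinitely_manyW (P Q : F -> Prop) :
  (forall c, P c -> Q c) -> infinitely_many P -> infinitely_many Q.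
Proof. by move=> PQ infP s; have [c cs /PQ] := infP s; exists c. Qed.

Lemma cofinitelyW (P Q : F -> Prop) :
  (forall c, P c -> Q c) -> cofinitely P -> cofinitely Q.
Proof. by move=> PQ [s Ps]; exists s => c /Ps /PQ. Qed.

Lemma cofinitely_and (P Q : F -> Prop) :
  cofinitely P -> cofinitely Q -> cofinitely (fun c => P c /\ Q c).
Proof.
move=> [s Ps] [t Qt]; exists (s ++ t) => c.
by rewrite mem_cat negb_or => /andP[/Ps ? /Qt ?].
Qed.

Lemma cofinitely_all (I : eqType) (r : seq I) (P : I -> F -> Prop) :
  (forall i, i \in r -> cofinitely (P i)) ->
  cofinitely (fun c => forall i, i \in r -> P i c).
Proof.
elim: r => [|i r IHr] Pr; first by exists [::].
have Pi := Pr i (mem_head _ _).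
have /IHr Pr' : forall i', i' \in r -> cofinitely (P i').
  by move=> i' ri'; apply: Pr; rewrite in_cons ri' orbT.
apply: cofinitelyW (cofinitely_and Pi Pr') => c [Pic Prc] i'.
by rewrite in_cons => /predU1P[->|/Prc].
Qed.

Lemma infinitely_many_and (P Q : F -> Prop) :
  cofinitely P -> infinitely_many Q -> infinitely_many (fun c => P c /\ Q c).
Proof.
move=> [s Ps] infQ t; have [c] := infQ (s ++ t).
by rewrite mem_cat negb_or => /andP[/Ps Pc ct] Qc; exists c.
Qed.

Lemma cofinitely_not (P : F -> Prop) :
  ~ infinitely_many P -> cofinitely (fun c => ~ P c).
Proof.
move=> ninfP; apply: NNPP => ncofP; apply: ninfP => s; apply: NNPP => nPs.
by apply: ncofP; exists s => c cs Pc; apply: nPs; exists c.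
Qed.

Lemma infinitely_many_not (P : F -> Prop) :
  ~ cofinitely P -> infinitely_many (fun c => ~ P c).
Proof.
move=> ncofP; apply: NNPP => /cofinitely_not/cofinitelyW cofP.
by apply/ncofP/cofP => c; apply: NNPP.
Qed.

Lemma cofinitely_not_subsingleton (P : F -> Prop) :
  (forall c c', c != c' -> P c -> P c' -> False) -> cofinitely (fun c => ~ P c).
Proof.
move=> uniqP; have [[c0 Pc0]|nP] := classic (exists c, P c).
  by exists [:: c0] => c; rewrite inE => neq_cc0 Pc; apply: uniqP Pc Pc0.
by exists [::] => c _ Pc; apply: nP; exists c.
Qed.

End Cofinite.

Section DimensionCount.
Variables (F : fieldType) (m : nat).
Implicit Types (W : {vspace tens F m}) (j : 'I_m).

Definition meets_lker W j c := (W :&: lker (contract j (chart c)) != 0)%VS.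

Lemma contract_image_neq0 W j : W != 0%VS ->
  cofinitely (fun c => (contract j (chart c) @: W)%VS != 0%VS).
Proof.
move=> W0.
apply: (@cofinitelyW _ (fun c => ~ (contract j (chart c) @: W)%VS == 0%VS)).
  by move=> c /negP.
apply: cofinitely_not_subsingleton => c c' neq_cc'.
rewrite -!lkerE => /subvP Wc /subvP Wc'.
have Wx := memv_pick W; apply/negP: W0; rewrite -vpick0.
by rewrite negbK (lker_contract_chart_eq0 neq_cc' (Wc _ Wx) (Wc' _ Wx)).
Qed.

(* Contractions in different slots commute, so [contract j c] maps
   [W :&: lker (contract j' d)] into [contract j c @: W :&: lker (contract j' d)]. *)
Lemma mem_lker_contract_of_not_meets W j j' c d x : j' != j ->
  x \in W -> x \in lker (contract j' (chart d)) ->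
  ~ meets_lker (contract j (chart c) @: W) j' d -> x \in lker (contract j (chart c)).
Proof.
move=> neq_j'j Wx kx /negP; rewrite /meets_lker negbK => /eqP meet0.
rewrite memv_ker -memv0 -meet0 memv_cap memv_img // memv_ker contractC //.
by move: kx; rewrite memv_ker => /eqP ->; rewrite linear0 eqxx.
Qed.

Lemma meets_lker_contract_image W j j' : j' != j ->
  infinitely_many (meets_lker W j') ->
  cofinitely (fun c => infinitely_many (meets_lker (contract j (chart c) @: W) j')).
Proof.
move=> neq_j'j infW.
apply: (@cofinitelyW _ (fun c =>
  ~ ~ infinitely_many (meets_lker (contract j (chart c) @: W) j'))).
  by move=> c /NNPP.
apply: cofinitely_not_subsingleton => c c' neq_cc' /cofinitely_not nc /cofinitely_not nc'.
have [d _ [[ncd nc'd] Wd]] := infinitely_many_and (cofinitely_and nc nc') infW [::].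
set U := (W :&: lker (contract j' (chart d)))%VS.
have [Wx kx] := memv_capP (memv_pick U).
apply/negP: Wd; rewrite /meets_lker -/U -vpick0 negbK.
have kc := mem_lker_contract_of_not_meets neq_j'j Wx kx ncd.
have kc' := mem_lker_contract_of_not_meets neq_j'j Wx kx nc'd.
by rewrite (lker_contract_chart_eq0 neq_cc' kc kc').
Qed.

Lemma contract_step W j (T : seq 'I_m) (P : F -> Prop) :
  W != 0%VS -> j \notin T ->
  (forall j', j' \in T -> infinitely_many (meets_lker W j')) -> infinitely_many P ->
  exists c, [/\ P c, (contract j (chart c) @: W)%VS != 0%VS &
    forall j', j' \in T ->
      infinitely_many (meets_lker (contract j (chart c) @: W) j')].
Proof.
move=> W0 jT infT infP.
have cofT : cofinitely (fun c => forall j', j' \in T ->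
    infinitely_many (meets_lker (contract j (chart c) @: W) j')).
  apply: cofinitely_all => j' j'T; apply: meets_lker_contract_image (infT _ j'T).
  by apply: contraNneq jT => <-.
have [c _ [[Wc Tc] Pc]] :=
  infinitely_many_and (cofinitely_and (contract_image_neq0 j W0) cofT) infP [::].
by exists c.
Qed.

Lemma size_lt_dimv W (T : seq 'I_m) : uniq T -> W != 0%VS ->
  (forall j, j \in T -> infinitely_many (meets_lker W j)) -> (size T < \dim W)%N.
Proof.
elim: T W => [|j T IHT] W /=; first by rewrite lt0n dimv_eq0.
move=> /andP[jT uniqT] W0 infT.
have infT' j' : j' \in T -> infinitely_many (meets_lker W j').
  by move=> j'T; apply: infT; rewrite in_cons j'T orbT.
have [c [Wc CW0 CWT]] := contract_step W0 jT infT' (infT j (mem_head _ _)).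
rewrite -(limg_ker_dim (contract j (chart c)) W) -addn1 addnC.
by rewrite leq_add // ?lt0n ?dimv_eq0 // IHT.
Qed.

Lemma cofinitely_dimv_meet_lker W j : \dim W = m.+1 ->
  (forall j', infinitely_many (meets_lker W j')) ->
  cofinitely (fun c => (\dim (W :&: lker (contract j (chart c))) <= 1)%N).
Proof.
move=> dimW infW; apply: NNPP => /infinitely_many_not big_meet.
have W0 : W != 0%VS by rewrite -dimv_eq0 dimW.
set T := rem j (enum 'I_m).
have jT : j \notin T by rewrite mem_rem_uniqF ?enum_uniq.
have [c [Wc CW0 CWT]] := contract_step W0 jT (fun j' _ => infW j') big_meet.
have := size_lt_dimv (rem_uniq j (enum_uniq 'I_m)) CW0 CWT.
rewrite size_rem ?mem_enum // size_enum_ord.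
have := limg_ker_dim (contract j (chart c)) W; rewrite dimW.
move/negP: Wc; rewrite -ltnNge; have := ltn_ord j.
set a := \dim (_ :&: _); set b := \dim (_ @: _); lia.
Qed.

End DimensionCount.

Section Generic.
Variable F : fieldType.
Hypothesis F_infinite : forall s : seq F, exists c, c \notin s.

Lemma exists_uniq_seq n : exists2 r : seq F, uniq r & size r = n.
Proof.
elim: n => [|n [r uniq_r size_r]]; first by exists [::].
by have [c cr] := F_infinite r; exists (c :: r); rewrite /= ?cr ?size_r.
Qed.

Definition with_roots (p : {poly F}) (s : seq F) := p * \prod_(x <- s) ('X - x%:P).

Lemma with_roots_neq0 (p : {poly F}) s : p != 0 -> with_roots p s != 0.
Proof.
move=> p0; rewrite mulf_neq0 // prodf_seq_neq0.
by apply/allP => x _; rewrite polyXsubC_eq0.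
Qed.

Lemma with_roots_nonroot (p : {poly F}) s c :
  (with_roots p s).[c] != 0 -> p.[c] != 0 /\ c \notin s.
Proof.
rewrite hornerM horner_prod mulf_eq0 negb_or => /andP[pc sc]; split=> //.
apply: contra sc => cs; rewrite prodf_seq_eq0; apply/hasP; exists c => //.
by rewrite hornerXsubC subrr eqxx.
Qed.

Lemma infinitely_many_nonroot (p : {poly F}) :
  p != 0 -> infinitely_many (fun c => p.[c] != 0).
Proof.
move=> p0 s; have q0 := with_roots_neq0 s p0.
have [r uniq_r size_r] := exists_uniq_seq (size (with_roots p s)).
have /allPn[c _ /with_roots_nonroot[pc cs]] : ~~ all (root (with_roots p s)) r.
  by apply/negP => /(max_poly_roots q0)/(_ uniq_r); rewrite size_r ltnn.
by exists c.
Qed.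

Definition binary_form d (p : {poly F}) (v : 'rV[F]_2) :=
  \sum_(k < d.+1) p`_k * v 0 0 ^+ k * v 0 1 ^+ (d - k).

Lemma binary_formE d (p : {poly F}) (v : 'rV[F]_2) :
  v 0 1 != 0 -> (size p <= d.+1)%N ->
  binary_form d p v = v 0 1 ^+ d * p.[v 0 0 / v 0 1].
Proof.
move=> v1 sp; rewrite (horner_coef_wide _ sp) mulr_sumr; apply: eq_bigr => k _.
have -> : v 0 1 ^+ d = v 0 1 ^+ k * v 0 1 ^+ (d - k).
  by rewrite -exprD subnKC // -ltnS ltn_ord.
by rewrite -{1}(divfK v1 (v 0 0)) exprMn; ring.
Qed.

Lemma binary_form_neq0 d (p : {poly F}) (v : 'rV[F]_2) : (size p <= d)%N ->
  binary_form d p v != 0 -> v 0 1 != 0.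
Proof.
move=> sp; apply: contraNneq => v1; rewrite /binary_form big1 // => k _.
have [kd|dk] := ltnP k d; first by rewrite v1 expr0n subn_eq0 leqNgt kd mulr0.
by rewrite nth_default ?mul0r // (leq_trans sp dk).
Qed.

Lemma chart_neq0 (c : F) : chart c != 0.
Proof. by apply/eqP => /matrixP/(_ 0 1)/eqP; rewrite /chart !mxE /= oner_eq0. Qed.

Lemma binary_form_chart d (p : {poly F}) (c : F) :
  (size p <= d.+1)%N -> binary_form d p (chart c) = p.[c].
Proof.
move=> sp; rewrite /chart binary_formE // ?mxE /= ?oner_eq0 //.
by rewrite expr1n mul1r divr1.
Qed.

Lemma genericW (P Q : 'rV[F]_2 -> Prop) :
  (forall v, P v -> Q v) -> generic P -> generic Q.
Proof. by move=> PQ [d [p [p0 sp Pp]]]; exists d, p; split=> // v v0 /(Pp v v0)/PQ. Qed.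

Lemma generic_chart (P : 'rV[F]_2 -> Prop) :
  generic P -> infinitely_many (fun c => P (chart c)).
Proof.
move=> [d [p [p0 sp Pp]]]; apply: infinitely_manyW (infinitely_many_nonroot p0).
by move=> c pc; apply: Pp (chart_neq0 c) _; rewrite -/(binary_form d p _) binary_form_chart.
Qed.

(* The finitely many exceptional points [c : 1], together with [1 : 0], are
   zeros of a single binary form. *)
Lemma generic_and_cofinitely (P Q : 'rV[F]_2 -> Prop) :
  generic P -> cofinitely (fun c => Q (chart c)) ->
  (forall v : 'rV[F]_2, v 0 1 != 0 -> Q (chart (v 0 0 / v 0 1)) -> Q v) ->
  generic (fun v => P v /\ Q v).
Proof.
move=> [d [p [p0 sp Pp]]] [s Qs] Q_chart; set q := with_roots p s.
exists (size q), q; split=> [||v v0]; rewrite ?with_roots_neq0 //.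
rewrite -/(binary_form _ q v) => qv; have v1 := binary_form_neq0 (leqnn _) qv.
move: qv; rewrite binary_formE // mulf_eq0 negb_or => /andP[_ /with_roots_nonroot[pc cs]].
split; last exact/Q_chart/Qs.
by apply: Pp v0 _; rewrite -/(binary_form d p v) binary_formE // mulf_neq0 ?expf_neq0.
Qed.
End Generic.

Lemma numField_infinite (F : numFieldType) (s : seq F) : exists c, c \notin s.
Proof.
set r := [seq i%:R : F | i <- iota 0 (size s).+1].
have uniq_r : uniq r by rewrite map_inj_uniq ?iota_uniq // => i k /eqP; rewrite eqr_nat => /eqP.
have /allPn[c _ cs] : ~~ all (mem s) r.
  by apply/negP => /allP/(uniq_leq_size uniq_r); rewrite size_map size_iota ltnn.
by exists c.
Qed.

Lemma factorization_structure_of_weak (F : fieldType) m (hT : vectType F)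
    (phi : 'Hom(hT, tens F m)) :
  (forall s : seq F, exists c, c \notin s) ->
  weak_factorization_structure phi -> factorization_structure phi.
Proof.
move=> F_infinite [dim_h ker0 weak]; split=> // j; set W := limg phi.
have dimW : \dim W = m.+1 by rewrite /W limg_dim_eq ?dim_h // ker0 capv0.
have meetsW j' : infinitely_many (meets_lker W j').
  apply: infinitely_manyW (generic_chart F_infinite (weak j')) => c.
  rewrite /meets_lker -dimv_eq0 -lt0n => /leq_trans; apply.
  exact/dimvS/capvS/Sigma0_sub_lker_contract.
pose Q v := (\dim (W :&: lker (contract j v)) <= 1)%N.
have Q_chart (v : 'rV[F]_2) : v 0 1 != 0 -> Q (chart (v 0 0 / v 0 1)) -> Q v.
  by move=> v1; rewrite /Q (lker_contract_chart _ v1).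
have cofQ : cofinitely (fun c => Q (chart c)) := cofinitely_dimv_meet_lker j dimW meetsW.
apply: genericW (generic_and_cofinitely (weak j) cofQ Q_chart) => v [ge1 le1].
apply/eqP; rewrite eqn_leq ge1 andbT (leq_trans _ le1) //.
exact/dimvS/capvS/Sigma0_sub_lker_contract.
Qed.

Theorem theorem2p21 :
  forall m : nat, (2 <= m)%N ->
  (forall (R : realType) (hT : vectType R) (phi : 'Hom(hT, tens R m)),
     weak_factorization_structure phi -> factorization_structure phi) /\
  (forall (R : realType) (hT : vectType R[i]) (phi : 'Hom(hT, tens R[i] m)),
     weak_factorization_structure phi -> factorization_structure phi).
Proof.
by move=> m _; split=> R hT phi; apply/factorization_structure_of_weak/numField_infinite.
Qed.
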